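(* Let $Q$ be a finite, simple, commutative, automorphic loop of exponent $2$ which is not associative. Let $U$ be the socle of $\mathrm{Mlt}(Q)$, a regular normal elementary abelian $2$-subgroup, viewed as a $GF(2)$-vector space (written additively) on which $\mathrm{Inn}(Q)$ acts linearly by conjugation, $u\mapsto u^h$. For $x\in Q$ write $R_x=h_xu_x$ with unique $h_x\in\mathrm{Inn}(Q)$ and $u_x\in U$; for $u\in U$ let $h_u=h_x$ where $x$ is the unique element with $u_x=u$. Then for all $u,v\in U$, $h_uh_v=h_vh_{u^{h_v}}$.
   Context: A loop is a set with a binary operation in which left and right division are uniquely solvable and which has a neutral element $1$. $R_a:x\mapsto xa$; $\mathrm{Mlt}(Q)$ is generated by all left and right translations; $\mathrm{Inn}(Q)$ is the stabilizer of $1$ in $\mathrm{Mlt}(Q)$; $Q$ is automorphic if $\mathrm{Inn}(Q)\le\mathrm{Aut}(Q)$; exponent $2$ means $x^2=1$ for all $x$; simple means no nontrivial proper normal subloops. For such $Q$, $\mathrm{Mlt}(Q)$ is a primitive group of affine type, $\mathrm{Mlt}(Q)=\mathrm{Inn}(Q)U$ with $U\cap\mathrm{Inn}(Q)=1$, and $Q$ is identified with $U$ via $u\leftrightarrow 1u$, under which $h\in\mathrm{Inn}(Q)$ acts as the linear map $u\mapsto u^h=h^{-1}uh$. Maps act on the right and are composed left to right. The map $x\mapsto u_x$ is a bijection $Q\to U$. *)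

From HB Require Import structures.
From mathcomp Require Import all_boot fingroup perm gseries.
Set Implicit Arguments. Unset Strict Implicit. Unset Printing Implicit Defensive.
Import GroupScope.
Local Open Scope group_scope.

(* A finite loop on the finite type T: binary operation with neutral element
   and uniquely solvable left/right division (for a finite carrier, unique
   solvability is equivalent to injectivity of the translations). *)
Record loop (T : finType) := Loop {
  lmul : T -> T -> T;
  lone : T;
  lmul1x : forall x, lmul lone x = x;
  lmulx1 : forall x, lmul x lone = x;
  lmul_injl : forall a, injective (lmul a);
  lmul_injr : forall a, injective (fun x => lmul x a)
}.

Section LoopDefs.
Variables (T : finType) (Q : loop T).
Declare Scope loop_scope.
Local Notation "x * y" := (lmul Q x y) : loop_scope.
Delimit Scope loop_scope with L.

Definition Rt (a : T) : {perm T} := perm (@lmul_injr T Q a).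
Definition Lt (a : T) : {perm T} := perm (@lmul_injl T Q a).

(* Multiplication group (composition in {perm T} is left to right,
   (p * q) x = q (p x), matching the paper's convention). *)
Definition Mlt : {set {perm T}} :=
  <<[set Rt a | a in T] :|: [set Lt a | a in T]>>.

Definition Inn : {set {perm T}} := [set h in Mlt | h (lone Q) == lone Q].

Definition is_loop_aut (f : {perm T}) : Prop :=
  forall x y, f (x * y)%L = (f x * f y)%L.

Definition automorphic : Prop := forall h, h \in Inn -> is_loop_aut h.

Definition commutative_loop : Prop := forall x y, (x * y)%L = (y * x)%L.

Definition exponent2 : Prop := forall x, (x * x)%L = lone Q.

Definition associative_loop : Prop :=
  forall x y z, (x * (y * z))%L = ((x * y) * z)%L.

Definition subloop (N : {set T}) : Prop :=
  [/\ lone Q \in N,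
      (forall a b, a \in N -> b \in N -> (a * b)%L \in N),
      (forall a x, a \in N -> (a * x)%L \in N -> x \in N) &
      (forall a x, a \in N -> (x * a)%L \in N -> x \in N)].

Definition normal_subloop (N : {set T}) : Prop :=
  subloop N /\ (forall h, h \in Inn -> h @: N \subset N).

Definition simple_loop : Prop :=
  forall N, normal_subloop N -> N = [set lone Q] \/ N = setT.

End LoopDefs.

Definition socle (gT : finGroupType) (G : {set gT}) : {set gT} :=
  <<\bigcup_(M : {group gT} | minnormal M G) M>>.

From HB Require Import structures.
From mathcomp Require Import all_boot fingroup perm gseries.
Import GroupScope.
Set Implicit Arguments.

(* Since [h_x] fixes [1], [u_x] sends [1] to
   [x]; so [u_z = u_x ^ h_y] forces [z = h_y x].  An automorphism [g]
   conjugates [R_x] to [R_(g x)], hence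
   [h_z u_z = R_z = R_x ^ h_y = h_x ^ h_y * u_z], and cancelling [u_z]
   gives [h_z = h_x ^ h_y], i.e. [h_x h_y = h_y h_z]. *)

Section LoopTranslations.
Variables (T : finType) (Q : loop T).

Lemma Inn_fix1 (h : {perm T}) : h \in Inn Q -> h (lone Q) = lone Q.
Proof. by rewrite inE => /andP[_ /eqP]. Qed.

Lemma Rt1 (x : T) : Rt Q x (lone Q) = x.
Proof. by rewrite /Rt permE lmul1x. Qed.

Lemma Rt_factor_1 (x : T) (h u : {perm T}) :
  h (lone Q) = lone Q -> Rt Q x = h * u -> u (lone Q) = x.
Proof. by move=> h1 defR; rewrite -(Rt1 x) defR permM h1. Qed.

Lemma conjg_perm_fix1 (p g : {perm T}) :
  g (lone Q) = lone Q -> (p ^ g) (lone Q) = g (p (lone Q)).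
Proof.
move=> g1; have gV1 : g^-1 (lone Q) = lone Q by rewrite -{1}g1 -permM mulgV perm1.
by rewrite /conjg !permM gV1.
Qed.

Lemma Rt_conj_aut (g : {perm T}) (x : T) :
  is_loop_aut Q g -> Rt Q x ^ g = Rt Q (g x).
Proof.
move=> gA; apply/permP => w; by rewrite /conjg !permM /Rt !permE gA f_iinv.
Qed.

End LoopTranslations.

Theorem lemma4p2 (T : finType) (Q : loop T) :
  simple_loop Q -> commutative_loop Q -> automorphic Q -> exponent2 Q ->
  ~ associative_loop Q ->
  forall (h u : T -> {perm T}),
    (forall x, h x \in Inn Q) ->
    (forall x, u x \in socle (Mlt Q)) ->
    (forall x, Rt Q x = (h x * u x)%g) ->
  forall x y z, u z = (u x ^ h y)%g ->
    (h x * h y)%g = (h y * h z)%g.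
Proof.
move=> _ _ autQ _ _ h u hInn _ defR x y z uz.
have h1 w : h w (lone Q) = lone Q := Inn_fix1 (hInn w).
have u1 w : u w (lone Q) = w := Rt_factor_1 (h1 w) (defR w).
have defz : z = h y x.
  by rewrite -[z]u1 uz conjg_perm_fix1 // u1.
have hz : h z = h x ^ h y.
  apply: (mulIg (u z)).
  rewrite -defR {1}defz -Rt_conj_aut; last exact: autQ (hInn y).
  by rewrite defR conjMg -uz.
by rewrite hz conjgC.
Qed.
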